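(* Let $\gamma=yxyy^*\in\mathcal{V}^1Q$, $\Pi_0=[xx^*,x^*]+[yx^*,y^*]$ and $\Pi_\infty=[yy^*,yxx^*+y^2y^*]$ in $\mathcal{V}^2Q$. Then $[\gamma,\Pi_0]_{\mathcal V}=\Pi_\infty$ and $[\gamma,\Pi_\infty]_{\mathcal V}=0$.
   Context: $Q$ is the quiver with one vertex and two loops $x,y$, so $\mathbb{C}Q=\mathbb{C}\langle x,y\rangle$ and $\mathbb{C}\bar Q=\mathbb{C}\langle x,y,x^*,y^*\rangle$, graded by the number of starred letters. $\mathcal{V}Q$ is the quotient of $\mathbb{C}\bar Q$ by the span of $PR-(-1)^{pr}RP$ for $P,R$ homogeneous of degrees $p,r$; $[u,v]=uv-vu$. For $w\in\{x,y,x^*,y^*\}$, $D_w(x_1\cdots x_n)=\sum_{i:x_i=w}(-1)^{\lambda_i\mu_i}x_{i+1}\cdots x_nx_1\cdots x_{i-1}$, $\lambda_i$ (resp. $\mu_i$) the number of starred letters among $x_{i+1},\dots,x_n$ (resp. $x_1,\dots,x_i$). For $\gamma\in\mathcal{V}^rQ,\delta\in\mathcal{V}^sQ$: $[\gamma,\delta]_{\mathcal V}=\sum_{a\in\{x,y\}}\big(D_{a^*}(\gamma)D_a(\delta)-(-1)^{(r-1)(s-1)}D_{a^*}(\delta)D_a(\gamma)\big)$ modulo the relations. *)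

From HB Require Import structures.
From mathcomp Require Import all_boot all_order all_algebra.
From mathcomp Require Import algC.
From Stdlib Require List.
Set Implicit Arguments. Unset Strict Implicit. Unset Printing Implicit Defensive.
Import Order.TTheory GRing.Theory Num.Theory.
Local Open Scope ring_scope.

Inductive letter := X | Y | Xs | Ys.
Definition letter_eq_dec : forall a b : letter, {a = b} + {a <> b}.
Proof. decide equality. Defined.
HB.instance Definition _ := comparableMixin letter_eq_dec.

Definition starred (l : letter) : bool :=
  match l with Xs | Ys => true | _ => false end.

Definition word := seq letter.
Definition nstar (w : word) : nat := count starred w.

(* An element of C<x,y,x*,y*> is given by its coefficient function on words;
   it is a (noncommutative) polynomial when it has finite support, i.e. (the
   alphabet being finite) when its support has bounded length. *)
Definition ncs := word -> algC.
Definition is_poly (f : ncs) : Prop := exists n, forall w, (n < size w)%N -> f w = 0.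
Definition homog (p : nat) (f : ncs) : Prop := forall w, f w != 0 -> nstar w = p.

Definition nzero : ncs := fun _ => 0.
Definition nadd (f g : ncs) : ncs := fun w => f w + g w.
Definition nsub (f g : ncs) : ncs := fun w => f w - g w.
Definition nscale (c : algC) (f : ncs) : ncs := fun w => c * f w.
Definition nmul (f g : ncs) : ncs :=
  fun w => \sum_(i < (size w).+1) f (take i w) * g (drop i w).
Definition gen (l : letter) : ncs := fun w => if w == [:: l] then 1 else 0.
Definition ncomm (f g : ncs) : ncs := nsub (nmul f g) (nmul g f).

Definition grcomm (p r : nat) (P R : ncs) : ncs :=
  nsub (nmul P R) (nscale ((-1) ^+ (p * r)) (nmul R P)).
Definition in_rel_span (h : ncs) : Prop :=
  exists l : seq (algC * ncs * ncs * nat * nat),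
    List.Forall (fun t => let: (c, P, R, p, r) := t in
        [/\ is_poly P, is_poly R, homog p P & homog r R]) l /\
    forall w, h w = \sum_(t <- l) let: (c, P, R, p, r) := t in
                                   c * grcomm p r P R w.
(* equality of the classes of f and g in VQ *)
Definition vq_eq (f g : ncs) : Prop := in_rel_span (nsub f g).

(* D_a(x_1...x_n) = sum_{i : x_i = a} (-1)^{lambda_i mu_i} x_{i+1}..x_n x_1..x_{i-1},
   extended linearly: the coefficient of v = b ++ a' in D_a f collects the
   words a' ++ a :: b of f, with lambda = nstar b, mu = nstar a' + [a starred]. *)
Definition Dw (a : letter) (f : ncs) : ncs :=
  fun v => \sum_(i < (size v).+1)
     let b := take i v in let a' := drop i v in
     (-1) ^+ (nstar b * (nstar a' + starred a)) * f (a' ++ a :: b).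

(* [gamma, delta]_V for gamma in V^r, delta in V^s (on representatives) *)
Definition vbracket (r s : nat) (g d : ncs) : ncs :=
  nsub (nadd (nmul (Dw Xs g) (Dw X d)) (nmul (Dw Ys g) (Dw Y d)))
       (nscale ((-1) ^ ((r%:Z - 1) * (s%:Z - 1)))
               (nadd (nmul (Dw Xs d) (Dw X g)) (nmul (Dw Ys d) (Dw Y g)))).

Definition gamma9 : ncs := nmul (nmul (nmul (gen Y) (gen X)) (gen Y)) (gen Ys).
Definition Pi0 : ncs :=
  nadd (ncomm (nmul (gen X) (gen Xs)) (gen Xs))
       (ncomm (nmul (gen Y) (gen Xs)) (gen Ys)).
Definition Piinf : ncs :=
  ncomm (nmul (gen Y) (gen Ys))
        (nadd (nmul (nmul (gen Y) (gen X)) (gen Xs))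
              (nmul (nmul (gen Y) (gen Y)) (gen Ys))).

(** All elements involved are integer combinations of words, and products,
    the operators [D_w] and the bracket (whose sign is [1] since [r = 1]) act
    on them word by word, so each side normalises to an explicit integer
    combination. The difference of the two sides of each identity is then an
    explicit integer combination of graded commutators
    [u v - (-1)^(|u||v|) v u] of words, which is checked coefficientwise. *)
From mathcomp Require Import all_boot all_order all_algebra.
From mathcomp Require Import algC.
From mathcomp Require Import zify ring.
From Stdlib Require Import FunctionalExtensionality.
From Stdlib Require List.
Set Implicit Arguments. Unset Strict Implicit. Unset Printing Implicit Defensive.
Import Order.TTheory GRing.Theory Num.Theory.
Local Open Scope ring_scope.

Definition zpoly := seq (int * word).

Definition zcoef (p : zpoly) (w : word) : int :=
  foldr (fun t acc => (if t.2 == w then t.1 else 0) + acc) 0 p.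

Definition zeval (p : zpoly) : ncs := fun w => (zcoef p w)%:~R.

Definition zscale (k : int) (p : zpoly) : zpoly := [seq (k * t.1, t.2) | t <- p].

Definition zmul (p q : zpoly) : zpoly :=
  [seq (s.1 * t.1, s.2 ++ t.2) | s <- p, t <- q].

(* One term for each occurrence [j] of [a] in [u = a' ++ a :: b], where
   [a' = take j u] and [b = drop j.+1 u]. *)
Definition zDw_term (a : letter) (t : int * word) : zpoly :=
  [seq (t.1 * (-1) ^+ (nstar (drop j.+1 t.2) * (nstar (take j t.2) + starred a)),
        drop j.+1 t.2 ++ take j t.2) | j <- iota 0 (size t.2) & nth X t.2 j == a].

Definition zDw (a : letter) (p : zpoly) : zpoly := flatten [seq zDw_term a t | t <- p].

Lemma zcoefE p w : zcoef p w = \sum_(t <- p) (if t.2 == w then t.1 else 0).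
Proof. by elim: p => [|t p IH] /=; rewrite ?big_nil ?big_cons ?IH. Qed.

Lemma zcoef_cat p q w : zcoef (p ++ q) w = zcoef p w + zcoef q w.
Proof. by rewrite !zcoefE big_cat. Qed.

Lemma zcoef_scale k p w : zcoef (zscale k p) w = k * zcoef p w.
Proof.
elim: p => [|t p IH] /=; first by rewrite mulr0.
by rewrite IH mulrDr; case: eqP => _; rewrite ?mulr0.
Qed.

Lemma zcoef_flatten (I : Type) (f : I -> zpoly) (r : seq I) w :
  zcoef (flatten [seq f i | i <- r]) w = \sum_(i <- r) zcoef (f i) w.
Proof. by elim: r => [|i r IH] /=; rewrite ?big_nil ?big_cons ?zcoef_cat ?IH. Qed.

Lemma zcoef_notin p w : w \notin map snd p -> zcoef p w = 0.
Proof.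
elim: p => //= t p IH; rewrite in_cons negb_or => /andP[neq_w notin_w].
by rewrite IH // addr0 eq_sym (negbTE neq_w).
Qed.

Lemma zeval_eq p q :
  all (fun u => zcoef p u == zcoef q u) (map snd (p ++ q)) -> zeval p = zeval q.
Proof.
move=> /allP eq_pq; apply: functional_extensionality => w; rewrite /zeval.
have [/eq_pq/eqP -> //|] := boolP (w \in map snd (p ++ q)).
by rewrite map_cat mem_cat negb_or => /andP[wNp wNq]; rewrite !zcoef_notin.
Qed.

Lemma nzero_zeval : nzero = zeval [::].
Proof. by apply: functional_extensionality. Qed.

Lemma gen_zeval l : gen l = zeval [:: (1, [:: l])].
Proof.
apply: functional_extensionality => w; rewrite /gen /zeval /= addr0 eq_sym.
by case: (_ == _).
Qed.

Lemma nadd_zeval p q : nadd (zeval p) (zeval q) = zeval (p ++ q).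
Proof. by apply: functional_extensionality => w; rewrite /nadd /zeval zcoef_cat intrD. Qed.

Lemma nscale_zeval k p : nscale k%:~R (zeval p) = zeval (zscale k p).
Proof. by apply: functional_extensionality => w; rewrite /nscale /zeval zcoef_scale intrM. Qed.

Lemma nsub_zeval p q : nsub (zeval p) (zeval q) = zeval (p ++ zscale (-1) q).
Proof.
apply: functional_extensionality => w.
by rewrite /nsub /zeval zcoef_cat zcoef_scale mulN1r intrD intrN.
Qed.

Lemma sum_take_drop_indicator (T : eqType) (R : pzSemiRingType) (u v w : seq T) (a b : R) :
  \sum_(i < (size w).+1)
     (if u == take i w then a else 0) * (if v == drop i w then b else 0)
  = if u ++ v == w then a * b else 0.
Proof.
case: eqP => [<-|uv_neq_w].
- have lt_u : (size u < (size (u ++ v)).+1)%N by rewrite size_cat ltnS leq_addr.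
  rewrite (bigD1 (Ordinal lt_u)) //= take_size_cat // drop_size_cat // !eqxx.
  rewrite big1 ?addr0 // => i neq_i; case: eqP => [u_take|]; last by rewrite mul0r.
  case/eqP: neq_i; apply: val_inj => /=.
  by have := congr1 size u_take; rewrite size_takel // -ltnS.
- apply: big1 => i _; case: eqP => u_take; case: eqP => v_drop; rewrite ?mulr0 ?mul0r //.
  by case: uv_neq_w; rewrite u_take v_drop cat_take_drop.
Qed.

Lemma nmul_zeval p q : nmul (zeval p) (zeval q) = zeval (zmul p q).
Proof.
apply: functional_extensionality => w; rewrite /nmul /zeval.
under eq_bigr do rewrite -intrM.
rewrite -rmorph_sum; congr (_ %:~R).
rewrite zcoefE big_allpairs_dep /=.
under eq_bigr do rewrite !zcoefE big_distrl /=.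
under eq_bigr do under eq_bigr do rewrite big_distrr /=.
rewrite exchange_big; apply: eq_bigr => s _.
by rewrite exchange_big; apply: eq_bigr => t _ /=; apply: sum_take_drop_indicator.
Qed.

Lemma size_rotate_letter (a : letter) (v : word) i :
  size (drop i v ++ a :: take i v) = (size v).+1.
Proof. by rewrite size_cat /= addnS addnC -size_cat cat_take_drop. Qed.

Lemma rotate_letter_split (a : letter) (u v : word) i :
  let j := (size v - i)%N in u = drop i v ++ a :: take i v ->
  [/\ nth X u j = a, take j u = drop i v & drop j.+1 u = take i v].
Proof.
move=> j ->; have size_drop_v : size (drop i v) = j by rewrite size_drop.
rewrite nth_cat -size_drop_v ltnn subnn take_size_cat //.
by rewrite drop_cat ltnNge leqnSn /= subSnn /= drop0.
Qed.

Lemma rotate_letter_join (a : letter) (u v : word) i :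
  let j := (size v - i)%N in (i <= size v)%N -> size u = (size v).+1 ->
  nth X u j = a -> v = drop j.+1 u ++ take j u -> u = drop i v ++ a :: take i v.
Proof.
move=> j le_i size_u nth_u ->.
have lt_j : (j < size u)%N by rewrite size_u ltnS leq_subr.
have size_tail : size (drop j.+1 u) = i by rewrite size_drop size_u subSS subKn.
rewrite take_size_cat // drop_size_cat //.
by rewrite -{1}nth_u -(drop_nth X lt_j) cat_take_drop.
Qed.

Lemma zDw_term_coef (a : letter) (c : int) (u v : word) :
  \sum_(i < (size v).+1) (-1) ^+ (nstar (take i v) * (nstar (drop i v) + starred a)) *
      (if u == drop i v ++ a :: take i v then c else 0)
  = zcoef (zDw_term a (c, u)) v.
Proof.
rewrite zcoefE /zDw_term big_map big_filter /=.
have [/eqP size_u | size_u] := boolP (size u == (size v).+1); last first.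
  rewrite big1 => [|i _]; last first.
    case: eqP => [u_eq|]; last by rewrite mulr0.
    by case/eqP: size_u; rewrite u_eq size_rotate_letter.
  rewrite big1_seq //= => j /andP[_]; rewrite mem_iota add0n => /andP[_ lt_j].
  case: eqP => // v_eq; case/negP: size_u; apply/eqP.
  by rewrite -v_eq size_cat size_drop size_takel ?(ltnW lt_j); lia.
have -> : iota 0 (size u) = index_iota 0 (size u) by rewrite /index_iota subn0.
rewrite size_u big_nat_rev [RHS]big_mkcond big_mkord /=.
apply: eq_bigr => -[i /= lt_i] _; rewrite add0n subSS.
have le_i : (i <= size v)%N by rewrite -ltnS.
have [u_eq|u_neq] := eqVneq u (drop i v ++ a :: take i v).
  have [nth_u take_u drop_u] := rotate_letter_split u_eq.
  by rewrite nth_u take_u drop_u cat_take_drop !eqxx mulrC.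
rewrite mulr0; case: eqP => nth_u //; case: eqP => v_eq //.
by case/eqP: u_neq; apply: rotate_letter_join.
Qed.

Lemma intr_sign (R : pzRingType) n : ((-1 : int) ^+ n)%:~R = (-1) ^+ n :> R.
Proof. by rewrite rmorphXn rmorphN1. Qed.

Lemma Dw_zeval a p : Dw a (zeval p) = zeval (zDw a p).
Proof.
apply: functional_extensionality => v; rewrite /Dw /zeval /=.
under eq_bigr do rewrite -intr_sign -intrM.
rewrite -rmorph_sum; congr (_ %:~R).
rewrite /zDw zcoef_flatten.
under eq_bigr do rewrite zcoefE big_distrr /=.
rewrite exchange_big; apply: eq_bigr => -[c u] _ /=.
by rewrite -zDw_term_coef; apply: eq_bigr => i _; rewrite eq_sym.
Qed.

Lemma vbracket1 s g d : vbracket 1 s g d =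
  nsub (nadd (nmul (Dw Xs g) (Dw X d)) (nmul (Dw Ys g) (Dw Y d)))
       (nadd (nmul (Dw Xs d) (Dw X g)) (nmul (Dw Ys d) (Dw Y g))).
Proof.
rewrite /vbracket subrr mul0r expr0z.
by congr nsub; apply: functional_extensionality => w; rewrite /nscale mul1r.
Qed.

Definition ncs_word (u : word) : ncs := zeval [:: (1, u)].

Lemma ncs_word_poly u : is_poly (ncs_word u).
Proof.
exists (size u) => w lt_u; rewrite /ncs_word /zeval /= addr0.
by case: eqP => // u_eq; rewrite u_eq ltnn in lt_u.
Qed.

Lemma ncs_word_homog u : homog (nstar u) (ncs_word u).
Proof.
move=> w; rewrite /ncs_word /zeval /= addr0.
by case: (u =P w) => [-> //|_]; rewrite mulr0z eqxx.
Qed.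

Definition zgrcomm (t : int * word * word) : zpoly :=
  let: (c, u, v) := t in
  [:: (c, u ++ v); (- c * (-1) ^+ (nstar u * nstar v), v ++ u)].

Definition grcomm_rel (t : int * word * word) : algC * ncs * ncs * nat * nat :=
  let: (c, u, v) := t in (c%:~R, ncs_word u, ncs_word v, nstar u, nstar v).

Lemma grcomm_rel_zeval t w :
  (let: (c, P, R, p, r) := grcomm_rel t in c * grcomm p r P R w) = zeval (zgrcomm t) w.
Proof.
case: t => [[c u] v] /=.
rewrite /grcomm /ncs_word !nmul_zeval -intr_sign.
rewrite nscale_zeval nsub_zeval /zeval -intrM; congr (_ %:~R) => /=.
by case: eqP; case: eqP => _ _; ring.
Qed.

Definition zrel (T : seq (int * word * word)) : zpoly := flatten [seq zgrcomm t | t <- T].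

Lemma vq_eq_zrel (T : seq (int * word * word)) f g :
  nsub f g = zeval (zrel T) -> vq_eq f g.
Proof.
move=> sub_fg; exists [seq grcomm_rel t | t <- T]; split.
  apply/List.Forall_forall => _ /List.in_map_iff [[[c u] v] [<- _]].
  by split; [exact: ncs_word_poly | exact: ncs_word_poly | exact: ncs_word_homog | exact: ncs_word_homog].
move=> w; rewrite sub_fg /zeval /zrel zcoef_flatten rmorph_sum big_map.
by apply: eq_bigr => t _; rewrite grcomm_rel_zeval.
Qed.

Definition cert_gamma9_Pi0 : seq (int * word * word) :=
  [:: (2, [:: Y], [:: X; Y; Xs; Ys]); (2, [:: Xs], [:: X; Y; Ys; Y]);
      (-2, [:: ], [:: X; Xs; Y; Ys; Y]); (2, [:: Ys], [:: Y; Y; Ys; Y]);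
      (-2, [:: Y; Xs], [:: X; Y; Ys]); (-2, [:: Y; Xs; Ys; Y], [:: X]);
      (-1, [:: Y; Ys; Y], [:: X; Xs]); (-1, [:: Y; Ys], [:: Y; Y; Ys]);
      (1, [:: Y], [:: X; Xs; Y; Ys]); (1, [:: ], [:: Y; Y; Ys; Y; Ys])].

Definition cert_gamma9_Piinf : seq (int * word * word) :=
  [:: (2, [:: Y; X; Y; Ys; Y], [:: X; Xs]); (-2, [:: Y; X; Y], [:: X; Xs; Y; Ys]);
      (2, [:: Y], [:: X; Y; Ys; Y; Y; Ys]); (-2, [:: Y], [:: X; Y; Y; Ys; Y; Ys]);
      (-2, [:: Y], [:: X; Y; Ys; Y; Ys; Y]); (-2, [:: Y; Ys; Y], [:: X; Y; Ys; Y]);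
      (2, [:: Y], [:: X; Xs; Y; X; Y; Ys]); (2, [:: Y], [:: X; Xs; Y; Ys; Y; X]);
      (2, [:: Y; Y; Ys; Y], [:: X; Y; Ys]); (2, [:: Y; Y; Ys; Y; Ys; Y], [:: X]);
      (-2, [:: Y; Ys; Y; Y], [:: X; Y; Ys]); (-2, [:: Y; Ys; Y; Y; Ys; Y], [:: X])].

Ltac zpoly_normalize :=
  rewrite vbracket1 /gamma9 /Pi0 /Piinf /ncomm ?nzero_zeval !gen_zeval;
  repeat rewrite ?nmul_zeval ?nadd_zeval ?nsub_zeval ?Dw_zeval.

Theorem mainTheorem9 :
  vq_eq (vbracket 1 2 gamma9 Pi0) Piinf /\ vq_eq (vbracket 1 2 gamma9 Piinf) nzero.
Proof.
split.
- apply: (vq_eq_zrel (T := cert_gamma9_Pi0)); zpoly_normalize.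
  by apply: zeval_eq; vm_compute.
- apply: (vq_eq_zrel (T := cert_gamma9_Piinf)); zpoly_normalize.
  by apply: zeval_eq; vm_compute.
Qed.
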